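(* Let $G$ be a finite connected graph with chromatic number $\chi$. Then either $G$ admits a proper $\chi$-coloring $c$ such that the oriented graph $D_c$ contains an oriented cycle, or for every vertex $v$ of $G$ there exists a nice $\chi$-coloring $c$ of $G$ such that $v$ is the unique sink of $D_c$.
   Context: A proper $\chi$-coloring is a map $c:V(G)\to\{1,\dots,\chi\}$ with adjacent vertices receiving different colors; colors are considered modulo $\chi$. For such a coloring $c$, $D_c$ is the oriented graph with vertex set $V(G)$ in which $ab$ is an arc if and only if $\{a,b\}$ is an edge of $G$ and $c(b)\equiv c(a)+1 \pmod{\chi}$. A sink is a vertex with no out-going arc. A proper $\chi$-coloring $c$ is called nice if $D_c$ is acyclic (contains no oriented cycle) and has exactly one sink. *)

From mathcomp Require Import all_boot.
Set Implicit Arguments. Unset Strict Implicit. Unset Printing Implicit Defensive.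

Section Coloring.
Variables (T : finType) (e : rel T).

Definition simple_graph : Prop := symmetric e /\ irreflexive e.

Definition connected_graph : Prop := forall x y : T, connect e x y.

(* proper k-coloring with colors in 'I_k = {0,..,k-1} (i.e. {1,..,k} shifted) *)
Definition proper_coloring (k : nat) (c : T -> 'I_k) : Prop :=
  forall a b, e a b -> c a != c b.

Definition colorable (k : nat) : Prop := exists c : T -> 'I_k, proper_coloring c.

Definition chromatic_number (chi : nat) : Prop :=
  colorable chi /\ forall k, k < chi -> ~ colorable k.

Definition Dc_arc (k : nat) (c : T -> 'I_k) : rel T :=
  fun a b => e a b && (nat_of_ord (c b) == (c a + 1) %% k).

Definition has_oriented_cycle (k : nat) (c : T -> 'I_k) : Prop :=
  exists a b, Dc_arc c a b /\ connect (Dc_arc c) b a.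

Definition acyclic (k : nat) (c : T -> 'I_k) : Prop := ~ has_oriented_cycle c.

Definition is_sink (k : nat) (c : T -> 'I_k) (v : T) : bool :=
  [forall w, ~~ Dc_arc c v w].

Definition nice_coloring (k : nat) (c : T -> 'I_k) : Prop :=
  proper_coloring c /\ acyclic c /\ #|[pred v | is_sink c v]| = 1.

End Coloring.

From mathcomp Require Import all_boot.
From mathcomp Require Import zify.
From Stdlib Require Import Classical.

Set Implicit Arguments. Unset Strict Implicit. Unset Printing Implicit Defensive.

(* Suppose no proper chi-coloring has an oriented cycle, and fix v. Lift a
   proper coloring to heights h : T -> nat, the coloring being h mod chi, with
   h a < h b + chi along every edge. As long as some sink w differs from v,
   recolor w by c(w)+1: since w is a sink this stays proper, and raising h w by
   one keeps the height condition. The height of v never changes, so by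
   connectivity all heights stay below #|T| * chi, and the process stops. The
   final coloring is acyclic by assumption, so it has a sink, and every sink
   is v. *)

Lemma acyclic_rel_has_sink (T : finType) (r : rel T) (x0 : T) :
  ~ (exists a b, r a b /\ connect r b a) -> exists s, forall w, ~~ r s w.
Proof.
move=> acy.
case: (arg_minnP (fun x => #|[set y | connect r x y]|) (isT : predT x0)).
move=> s _ smin; exists s => w; apply/negP => rsw.
have := smin w isT.
suff : #|[set y | connect r w y]| < #|[set y | connect r s y]| by lia.
apply: proper_card; apply/properP; split.
  apply/subsetP => y; rewrite !inE => wy.
  exact: connect_trans (connect1 rsw) wy.
exists s; first by rewrite inE connect0.
rewrite inE; apply/negP => ws; apply: acy; by exists s, w.
Qed.

Lemma unique_sink_nice_coloring (T : finType) (e : rel T) (k : nat)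
    (c : T -> 'I_k) (v : T) :
  proper_coloring e c -> acyclic e c -> (forall w, is_sink e c w -> w = v) ->
  [/\ nice_coloring e c, is_sink e c v & forall w, is_sink e c w -> w = v].
Proof.
move=> pc acy sink_v.
have [s /forallP s_sink] := acyclic_rel_has_sink v acy.
have v_sink : is_sink e c v by rewrite -(sink_v s s_sink).
split=> //; do 2!split=> //.
rewrite -(card1 v); apply: eq_card => x; rewrite !inE.
by apply/idP/eqP => [/sink_v | ->].
Qed.

Section Heights.
Variables (T : finType) (e : rel T) (chi : nat).
Hypothesis chi_gt0 : 0 < chi.
Hypotheses (e_sym : symmetric e) (e_irr : irreflexive e).

Definition height_coloring (h : T -> nat) : T -> 'I_chi :=
  fun x => Ordinal (ltn_pmod (h x) chi_gt0).

Definition admissible_height (h : T -> nat) : Prop :=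
  (forall a b, e a b -> h a %% chi != h b %% chi) /\
  (forall a b, e a b -> h a < h b + chi).

Definition raise (h : T -> nat) (w : T) : T -> nat :=
  fun x => if x == w then (h x).+1 else h x.

Definition height_deficit (h : T -> nat) : nat :=
  \sum_(x : T) (#|T| * chi - h x).

Lemma height_coloring_proper h :
  admissible_height h -> proper_coloring e (height_coloring h).
Proof.
move=> [h_neq _] a b eab; apply/negP => /eqP/(congr1 val) /= /eqP.
by rewrite (negbTE (h_neq a b eab)).
Qed.

Lemma sink_height_succ_neq h w u :
  is_sink e (height_coloring h) w -> e w u -> h u %% chi != (h w).+1 %% chi.
Proof.
move=> /forallP /(_ u); rewrite /Dc_arc /= => no_arc ewu.
by rewrite ewu /= in no_arc; rewrite -addn1 -modnDml.
Qed.

(* For a neighbour b of the sink w, h w < h b + chi and h w + 1 = h b + chi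
   would give h b = h w + 1 mod chi, i.e. an arc out of w. *)
Lemma raise_sink_admissible h w :
  admissible_height h -> is_sink e (height_coloring h) w ->
  admissible_height (raise h w).
Proof.
move=> [h_neq h_lt] w_sink; rewrite /raise; split => a b eab.
- case: (eqVneq a w) => [aw|aw]; case: (eqVneq b w) => [bw|bw].
  + by move: eab; rewrite aw bw e_irr.
  + by move: eab; rewrite aw eq_sym => eab; exact: (sink_height_succ_neq w_sink).
  + by move: eab; rewrite bw => eab; apply: (sink_height_succ_neq w_sink); rewrite e_sym.
  + exact: h_neq.
- case: (eqVneq a w) => [aw|aw]; case: (eqVneq b w) => [bw|bw].
  + by move: eab; rewrite aw bw e_irr.
  + move: eab; rewrite aw => eab.
    rewrite ltn_neqAle (h_lt _ _ eab) andbT.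
    by apply: contraNneq (sink_height_succ_neq w_sink eab) => ->; rewrite modnDr.
  + by have := h_lt _ _ eab; rewrite bw; lia.
  + exact: h_lt.
Qed.

Lemma admissible_height_path_bound h p w :
  admissible_height h -> path e w p -> h w <= h (last w p) + size p * chi.
Proof.
move=> [_ h_lt]; elim: p w => [|x p IH] w /=; first by rewrite addn0.
by move=> /andP [ewx /IH]; have := h_lt _ _ ewx; lia.
Qed.

Lemma admissible_height_bounded h v w :
  connected_graph e -> admissible_height h -> h v < chi -> h w < #|T| * chi.
Proof.
move=> conn adm hv.
have /connectP [p pth lst] := conn w v.
case: (shortenP pth) lst => p' pth' uniq_p' _ lst.
have := admissible_height_path_bound adm pth'; rewrite -lst.
have := max_card (mem (w :: p')); move/card_uniqP: uniq_p' => /= -> size_le.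
move=> hw; apply: (leq_ltn_trans hw).
apply: (@leq_trans ((size p').+1 * chi)); first by rewrite mulSn ltn_add2r.
by rewrite leq_mul2r size_le orbT.
Qed.

Lemma height_deficit_raise h w :
  h w < #|T| * chi -> height_deficit (raise h w) < height_deficit h.
Proof.
move=> hw; rewrite /height_deficit (bigD1 w) //= [X in _ < X](bigD1 w) //=.
rewrite /raise eqxx (eq_bigr (fun x => #|T| * chi - h x)); last first.
  by move=> x /negbTE ->.
by move: hw; set M := #|T| * chi; set S := \sum_(i | _) _; lia.
Qed.

Lemma nice_coloring_from_height v h :
  connected_graph e ->
  (forall c : T -> 'I_chi, proper_coloring e c -> acyclic e c) ->
  admissible_height h -> h v < chi ->
  exists c : T -> 'I_chi, nice_coloring e c /\ is_sink e c v /\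
    (forall w, is_sink e c w -> w = v).
Proof.
move=> conn all_acyclic.
have [n] := ubnP (height_deficit h); elim: n h => // n IH h /ltnSE def_le adm hv.
case: (pickP [pred w | is_sink e (height_coloring h) w && (w != v)]).
  move=> w /andP [w_sink w_neq_v]; apply: (IH (raise h w)).
  - apply: leq_trans def_le.
    exact/height_deficit_raise/(admissible_height_bounded _ conn adm hv).
  - exact: raise_sink_admissible.
  - by rewrite /raise eq_sym (negbTE w_neq_v).
move=> no_other_sink; have pc := height_coloring_proper adm.
have sink_v w : is_sink e (height_coloring h) w -> w = v.
  by move=> w_sink; apply/eqP; move: (no_other_sink w); rewrite /= w_sink => /negbFE.
have [nice v_sink _] := unique_sink_nice_coloring pc (all_acyclic _ pc) sink_v.
by exists (height_coloring h).
Qed.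

End Heights.

Theorem corollary5 (T : finType) (e : rel T) (chi : nat) :
  simple_graph e -> connected_graph e -> chromatic_number e chi ->
  (exists c : T -> 'I_chi, proper_coloring e c /\ has_oriented_cycle e c) \/
  (forall v : T, exists c : T -> 'I_chi,
      nice_coloring e c /\ is_sink e c v /\
      (forall w : T, is_sink e c w -> w = v)).
Proof.
move=> [e_sym e_irr] conn [[c0 pc0] _].
have [|no_cycle] := classic (exists c : T -> 'I_chi,
  proper_coloring e c /\ has_oriented_cycle e c); first by left.
right=> v.
have chi_gt0 : 0 < chi by have := ltn_ord (c0 v); lia.
have all_acyclic (c : T -> 'I_chi) : proper_coloring e c -> acyclic e c.
  by move=> pc cyc; apply: no_cycle; exists c.
apply: (nice_coloring_from_height chi_gt0 e_sym e_irr (h := fun x => val (c0 x)))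
  => //; last exact: ltn_ord.
split=> a b eab /=; last by have := ltn_ord (c0 a); lia.
by rewrite !modn_small ?ltn_ord //; exact: pc0.
Qed.
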